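(* For any $0<r<\log 1.01$ and any $s\in\mathbb{R}$ with $6r\le|s|\le\log 1.9$, we have $a_sK_r\cap K_r=\varnothing$.
   Context: $X=\mathrm{SL}_2(\mathbb{R})/\mathrm{SL}_2(\mathbb{Z})$ is the space of unimodular lattices in $\mathbb{R}^2$. $\|\cdot\|$ is the supremum norm on $\mathbb{R}^2$. For $\Lambda\in X$ let $\Delta(\Lambda)=\sup_{v\in\Lambda\smallsetminus\{0\}}\log(1/\|v\|)$, and for $r\ge0$ let $K_r=\Delta^{-1}([0,r])$. $a_s=\mathrm{diag}(e^s,e^{-s})$ acts on $X$ by left multiplication. *)

From HB Require Import structures.
From mathcomp Require Import all_boot all_order all_algebra.
From mathcomp Require Import all_classical all_reals all_analysis.
Set Implicit Arguments. Unset Strict Implicit. Unset Printing Implicit Defensive.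
Import Order.TTheory GRing.Theory Num.Theory.
Local Open Scope classical_set_scope.
Local Open Scope ring_scope.

Section Lattices.
Variable R : realType.

Definition vec2 (x y : R) : 'cV[R]_2 :=
  \col_(i < 2) (if i == ord0 then x else y).

Definition supnorm (v : 'cV[R]_2) : R :=
  Num.max `|v ord0 ord0| `|v (lift ord0 ord0) ord0|.

Definition lattice_of (g : 'M[R]_2) : set 'cV[R]_2 :=
  [set g *m vec2 m%:~R n%:~R | m in [set: int] & n in [set: int]].

(* X = SL_2(R)/SL_2(Z): the unimodular lattices g Z^2 with det g = 1 *)
Definition X : set (set 'cV[R]_2) :=
  [set L | exists g : 'M[R]_2, \det g = 1 /\ L = lattice_of g].

Definition Delta (L : set 'cV[R]_2) : \bar R :=
  ereal_sup [set (ln (1 / supnorm v))%:E | v in L `\ 0].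

Definition K (r : R) : set (set 'cV[R]_2) :=
  [set L | X L /\ (0 <= Delta L)%E /\ (Delta L <= r%:E)%E].

Definition a_ (s : R) : 'M[R]_2 :=
  \matrix_(i < 2, j < 2)
    (if i == j then (if i == ord0 then expR s else expR (- s)) else 0).

Definition act (h : 'M[R]_2) (L : set 'cV[R]_2) : set 'cV[R]_2 :=
  [set h *m v | v in L].

End Lattices.

From HB Require Import structures.
From mathcomp Require Import all_boot all_order all_algebra.
From mathcomp Require Import all_classical all_reals all_analysis.
From mathcomp Require Import ring lra.
Set Implicit Arguments. Unset Strict Implicit. Unset Printing Implicit Defensive.
Import Order.TTheory GRing.Theory Num.Theory.
Local Open Scope classical_set_scope.
Local Open Scope ring_scope.

(* Put d = e^{-r} and E = e^{|s|}, so that 100/101 < d < 1 and d^{-6} <= E <= 1.9.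
   If L and a_s L both lie in K_r, every nonzero vector of L and of a_s L has sup
   norm at least d, while L contains a nonzero vector of sup norm at most 1/d.
   Dividing that vector by the gcd of its coordinates, completing it to a basis,
   reflecting coordinates and reducing the second basis vector modulo the first
   yields a basis v = (p, q), z = (x, y) of L with p > 0, q >= 0, 0 <= x < p,
   p y - q x = 1 and p, q <= 1/d.  The lattice vectors v, z, z - v, 2v - z and
   their images under a_s cannot all have sup norm at least d: this is an
   elementary case analysis on whether E (p - x) < d, using that d is close to 1.
   For s < 0 the two coordinates exchange their roles. *)

Definition long_vec (R : numDomainType) (d x y : R) := d <= `|x| \/ d <= `|y|.

(* [long_pair d (expR s) x y]: both (x, y) and a_s (x, y) have sup norm >= d. *)
Definition long_pair (R : numFieldType) (d c x y : R) :=
  long_vec d x y /\ long_vec d (c * x) (y / c).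

Definition short_vec (R : numDomainType) (d x y : R) := `|x| * d <= 1 /\ `|y| * d <= 1.

Definition long_lattice (R : numFieldType) (d c p q a b : R) :=
  forall m n : int, (m != 0) || (n != 0) ->
  long_pair d c (p * m%:~R + a * n%:~R) (q * m%:~R + b * n%:~R).

Lemma long_pairNl (R : numFieldType) (d c x y : R) :
  long_pair d c (- x) y = long_pair d c x y.
Proof. by rewrite /long_pair /long_vec mulrN !normrN. Qed.

Lemma long_pairNr (R : numFieldType) (d c x y : R) :
  long_pair d c x (- y) = long_pair d c x y.
Proof. by rewrite /long_pair /long_vec mulNr !normrN. Qed.

Lemma long_pair_swap (R : numFieldType) (d c x y : R) :
  long_pair d c x y -> long_pair d c^-1 y x.
Proof.
rewrite /long_pair /long_vec invrK [_ * c]mulrC [c^-1 * _]mulrC.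
by move=> [[?|?] [?|?]]; split; by [left|right].
Qed.

Lemma long_lattice_first (R : numFieldType) (d c p q a b : R) :
  long_lattice d c p q a b -> long_pair d c p q.
Proof. by move=> /(_ 1 0 isT); rewrite !mulr1 !mulr0 !addr0. Qed.

Lemma long_lattice_flipx (R : numFieldType) (d c p q a b : R) :
  long_lattice d c p q a b -> long_lattice d c (- p) q a (- b).
Proof.
move=> hL m n mn; rewrite -long_pairNl.
have -> : - (- p * m%:~R + a * n%:~R) = p * m%:~R + a * (- n)%:~R by rewrite intrN; ring.
have -> : q * m%:~R + - b * n%:~R = q * m%:~R + b * (- n)%:~R by rewrite intrN; ring.
by apply: hL; rewrite oppr_eq0.
Qed.

Lemma long_lattice_flipy (R : numFieldType) (d c p q a b : R) :
  long_lattice d c p q a b -> long_lattice d c p (- q) (- a) b.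
Proof.
move=> hL m n mn; rewrite -long_pairNr.
have -> : p * m%:~R + - a * n%:~R = p * m%:~R + a * (- n)%:~R by rewrite intrN; ring.
have -> : - (- q * m%:~R + b * n%:~R) = q * m%:~R + b * (- n)%:~R by rewrite intrN; ring.
by apply: hL; rewrite oppr_eq0.
Qed.

Lemma long_lattice_swap (R : numFieldType) (d c p q a b : R) :
  long_lattice d c p q a b -> long_lattice d c^-1 q p (- b) (- a).
Proof.
move=> hL m n mn; have /long_pair_swap : long_pair d c
    (p * m%:~R + a * (- n)%:~R) (q * m%:~R + b * (- n)%:~R) by apply: hL; rewrite oppr_eq0.
by rewrite intrN !mulrN !mulNr.
Qed.

Lemma intr_comb_change (R : comRingType) (x y : R) (i j u v m n : int) :
  (x * i%:~R + y * j%:~R) * m%:~R + (x * u%:~R + y * v%:~R) * n%:~R =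
  x * (i * m + u * n)%:~R + y * (j * m + v * n)%:~R.
Proof. by rewrite !intrD !intrM; ring. Qed.

Lemma long_lattice_change (R : numFieldType) (d c p q a b : R) (i j u v : int) :
  i * v - j * u = 1 -> long_lattice d c p q a b ->
  long_lattice d c (p * i%:~R + a * j%:~R) (q * i%:~R + b * j%:~R)
                   (p * u%:~R + a * v%:~R) (q * u%:~R + b * v%:~R).
Proof.
move=> ij hL m n mn; rewrite !intr_comb_change; apply: hL.
apply: contraTT mn; rewrite !negb_or !negbK => /andP[/eqP e1 /eqP e2].
apply/andP; split; apply/eqP.
- have -> : m = v * (i * m + u * n) - u * (j * m + v * n) by rewrite -[m in LHS]mul1r -ij; ring.
  by rewrite e1 e2 !mulr0 subr0.
- have -> : n = i * (j * m + v * n) - j * (i * m + u * n) by rewrite -[n in LHS]mul1r -ij; ring.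
  by rewrite e1 e2 !mulr0 subr0.
Qed.

Lemma short_vec_intrM (R : archiNumDomainType) (d x y : R) (k : int) :
  k != 0 -> 0 <= d -> short_vec d (k%:~R * x) (k%:~R * y) -> short_vec d x y.
Proof.
move=> k0 d0; have k1 : 1 <= `|k%:~R : R| by rewrite norm_intr_ge1 ?intr_int ?intr_eq0.
have le_k z : `|z| * d <= `|k%:~R * z| * d.
  by rewrite ler_wpM2r // normrM ler_peMl.
by move=> [hx hy]; split; [apply: le_trans hx | apply: le_trans hy].
Qed.

Lemma primitive_decomposition (m n : int) : (m != 0) || (n != 0) ->
  exists k i j u v : int, [/\ k != 0, m = k * i, n = k * j & i * v - j * u = 1].
Proof.
move=> mn; have [u0 [v0 bez]] := Bezoutz m n; set k := gcdz m n in bez *.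
have k0 : k != 0 by rewrite gcdz_eq0 negb_and.
have em : m = k * (m %/ k)%Z by rewrite mulrC divzK ?dvdz_gcdl.
have en : n = k * (n %/ k)%Z by rewrite mulrC divzK ?dvdz_gcdr.
exists k, (m %/ k)%Z, (n %/ k)%Z, (- v0), u0; split=> //.
apply: (mulfI k0); rewrite mulr1 -[in RHS]bez [in RHS]em [in RHS]en; ring.
Qed.

Section Reduction.
Variables (R : archiRealFieldType) (d E : R).
Hypotheses (d_gt : 100 / 101 < d) (d_lt1 : d < 1).
Hypotheses (E_ge : 1 <= E * d ^+ 6) (E_le : E <= 19 / 10).

Let d_gt0 : 0 < d. Proof. by move: d_gt => h; lra. Qed.

Let sqr_d_lt1 : d ^+ 2 < 1.
Proof. by rewrite expr_lt1 // ltW // d_gt0. Qed.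

Let sqr_d_gt : 98 / 100 < d ^+ 2.
Proof.
move: d_gt => d_gt'.
have : 0 < (d - 100 / 101) * (d + 100 / 101) by apply: mulr_gt0; lra.
rewrite expr2; lra.
Qed.

Let E_gt0 : 0 < E.
Proof.
rewrite -(pmulr_lgt0 _ (exprn_gt0 6 d_gt0)).
exact: lt_le_trans ltr01 E_ge.
Qed.

Let E_lt : E < 2 * d ^+ 2.
Proof. move: E_le sqr_d_gt => h1 h2; lra. Qed.

Let u_bounds : 98 / 100 < d ^+ 2 < 1. Proof. by rewrite sqr_d_gt sqr_d_lt1. Qed.
Let d4E : d ^+ 4 = (d ^+ 2) ^+ 2. Proof. by rewrite -exprM. Qed.
Let d6E : d ^+ 6 = (d ^+ 2) ^+ 3. Proof. by rewrite -exprM. Qed.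

Let sqr_d_E_gt1 : 1 < d ^+ 2 * E.
Proof.
move: E_ge E_gt0 u_bounds; rewrite d6E; move: (d ^+ 2) => u h1 h2 /andP[h3 h4].
rewrite !exprS expr0 mulr1 in h1; nra.
Qed.

Let E_d4_gt1 : 1 < E * d ^+ 4.
Proof.
move: E_ge E_gt0 u_bounds; rewrite d6E d4E; move: (d ^+ 2) => u h1 h2 /andP[h3 h4].
have : 0 < E * (u * u) * (1 - u) by rewrite !mulr_gt0 // ?subr_gt0; lra.
rewrite !exprS expr0 mulr1 in h1 *; lra.
Qed.

Let d6_lt : d ^+ 6 + 1 < 2 * d ^+ 2.
Proof.
move: u_bounds; rewrite d6E; move: (d ^+ 2) => u /andP[h3 h4].
have t1 : 0 < u * ((1 - u) * (u - 98 / 100)) by rewrite !mulr_gt0 //; lra.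
have t2 : 0 < (1 - u) * (198 / 100 * u - 1) by rewrite mulr_gt0 //; lra.
rewrite !exprS expr0 mulr1; lra.
Qed.

Let d4_lt : (2 - d ^+ 2) * d ^+ 4 < 1.
Proof.
move: u_bounds; rewrite d4E; move: (d ^+ 2) => u /andP[h3 h4].
have t0 : 0 < u * (1 - u) by rewrite mulr_gt0 //; lra.
have t : 0 < (1 - u) * (1 + u * (1 - u)) by rewrite mulr_gt0 //; lra.
rewrite !exprS expr0 mulr1; lra.
Qed.

Lemma lt_dE_of_short t : t * d <= 1 -> t < d * E.
Proof.
move=> td; have := sqr_d_E_gt1; rewrite expr2 => dE.
rewrite -(ltr_pM2r d_gt0); lra.
Qed.

Lemma long_vec_scale x y :
  long_vec d (E * x) (y / E) -> d <= E * `|x| \/ d * E <= `|y|.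
Proof.
have E0 := E_gt0.
by rewrite /long_vec !normrM normfV (gtr0_norm E0) ler_pdivlMr.
Qed.

Lemma long_pair_scaled_first x y : long_pair d E x y -> `|y| * d <= 1 -> d <= E * `|x|.
Proof.
move=> [_ /long_vec_scale [//|hy]] /lt_dE_of_short; lra.
Qed.

Lemma reduced_caseI p q x y :
  0 < p -> 0 <= q -> p * d <= 1 -> q * d <= 1 -> 0 <= x < p -> p * y - q * x = 1 ->
  long_vec d p q -> d <= E * p -> E * (p - x) < d ->
  long_vec d (E * (x - p)) ((y - q) / E) -> long_vec d (2 * p - x) (2 * q - y) -> False.
Proof.
move=> p0 q0 pd qd /andP[x0 xp] det hv hEp hI /long_vec_scale hw h2.
have d0 := d_gt0; have E0 := E_gt0; have dE := sqr_d_E_gt1.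
have Ed6 := E_ge; have E2 := E_lt; have D6 := d6_lt.
have q_lt := lt_dE_of_short qd.
have qx0 : 0 <= q * x by rewrite mulr_ge0.
have qpx0 : 0 <= q * (p - x) by rewrite mulr_ge0 // subr_ge0 ltW.
have y0 : 0 < y by rewrite -(pmulr_rgt0 _ p0); lra.
have yq : d * E <= y - q.
  case: hw; first by rewrite distrC gtr0_norm ?subr_gt0 //; lra.
  by rewrite ler_normr => /orP[//|]; lra.
have dEp_le : d * E * p <= p * (y - q) by rewrite mulrC ler_pM2l.
have dEp : d * E * p <= 1 by lra.
have p_lt : p < d.
  have : 0 < (d ^+ 2 * E - 1) * p by rewrite mulr_gt0 // subr_gt0.
  have : d * (d * E * p) <= d * 1 by rewrite ler_pM2l.
  lra.
have q_ge : d <= q by case: hv; rewrite ?(gtr0_norm p0) ?(ger0_norm q0) //; lra.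
have pxd : d * (p - x) <= 1 - d ^+ 2.
  have : d * (p - x) <= q * (p - x) by rewrite ler_pM2r // subr_gt0.
  have : d * d <= d * (E * p) by rewrite ler_pM2l.
  lra.
have dp : d * p <= d ^+ 6.
  have : 0 <= d * p * (E * d ^+ 6 - 1) by rewrite !mulr_ge0 ?subr_ge0 // ltW.
  have : 0 <= d ^+ 6 * (1 - d * E * p) by rewrite mulr_ge0 ?subr_ge0 ?exprn_ge0 // ltW.
  lra.
case: h2; rewrite ler_normr => /orP[] h2.
- (* d (2p - x) = d p + d (p - x) <= d^6 + 1 - d^2 < d^2 *)
  have : d * d <= d * (2 * p - x) by rewrite ler_pM2l.
  lra.
- lra.
- lra.
- (* d (y - 2q) = d (y - q) - d q <= E - d^2 < d^2 *)
  have : d * (y - q) <= E * p * (y - q) by rewrite ler_pM2r // subr_gt0; lra.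
  have : E * (p * (y - q)) <= E * 1 by rewrite ler_pM2l //; lra.
  have : d * d <= d * q by rewrite ler_pM2l.
  have : d * d <= d * - (2 * q - y) by rewrite ler_pM2l.
  lra.
Qed.

Lemma reduced_caseII p q x y :
  0 < p -> 0 <= q -> p * d <= 1 -> q * d <= 1 -> 0 <= x < p -> p * y - q * x = 1 ->
  long_vec d p q -> d <= E * p -> d <= E * (p - x) ->
  long_vec d (E * x) (y / E) -> long_vec d (x - p) (y - q) -> False.
Proof.
move=> p0 q0 pd qd /andP[x0 xp] det hv hEp hII /long_vec_scale hz hw.
have d0 := d_gt0; have E0 := E_gt0; have Ed6 := E_ge; have E2 := E_lt.
have Ed4 := E_d4_gt1; have D4 := d4_lt.
have q_lt := lt_dE_of_short qd.
have qx0 : 0 <= q * x by rewrite mulr_ge0.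
have y0 : 0 < y by rewrite -(pmulr_rgt0 _ p0); lra.
have Ex : E * x < d.
  have Epd : E * (p * d) <= E * 1 by rewrite ler_pM2l.
  have : E * p < 2 * d by rewrite -(ltr_pM2r d0); lra.
  lra.
have y_ge : d * E <= y by case: hz; rewrite ?(ger0_norm x0) ?(gtr0_norm y0); lra.
have yq : p - x < d -> d <= y - q.
  by move=> px; case: hw; [rewrite distrC|]; rewrite gtr0_norm ?subr_gt0 //; lra.
have [p_ge|p_lt] := lerP d p.
- have py : d ^+ 2 * E <= p * y.
    have : d * (d * E) <= p * (d * E) by rewrite ler_pM2r ?mulr_gt0.
    have : p * (d * E) <= p * y by rewrite ler_pM2l.
    lra.
  have [px_ge|px_lt] := lerP d (p - x).
  + (* d^2 p y = d^2 (1 + q x) <= 1, against p y >= d^2 E and E d^4 > 1 *)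
    have : d * (q * d * x) <= d * x by rewrite ler_pM2l // ler_piMl.
    have : d * x <= d * (p - d) by rewrite ler_pM2l //; lra.
    have : d ^+ 2 * (d ^+ 2 * E) <= d ^+ 2 * (p * y) by rewrite ler_pM2l ?exprn_gt0.
    have : d ^+ 2 * (p * y - q * x) = d ^+ 2 by rewrite det mulr1.
    lra.
  + (* p y = 1 + q x <= 2 - d^2, against p y >= d^2 E and (2 - d^2) d^4 < 1 <= E d^6 *)
    have hq := yq px_lt.
    have pyq : p * d <= p * (y - q) by rewrite ler_pM2l.
    have pd2 : d * d <= p * d by rewrite ler_pM2r.
    have : x < p - x by rewrite -(ltr_pM2l E0); lra.
    move=> /ltW /(ler_wpM2l q0) qx.
    have : d ^+ 4 * (d ^+ 2 * E) <= d ^+ 4 * (2 - d ^+ 2) by rewrite ler_pM2l ?exprn_gt0 //; lra.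
    lra.
- have q_ge : d <= q by case: hv; rewrite ?(gtr0_norm p0) ?(ger0_norm q0) //; lra.
  have hq : d <= y - q by apply: yq; lra.
  (* E = E p (y - q) + E q (p - x) >= 2 d^2 > E *)
  have : d * (E * p) <= (y - q) * (E * p) by rewrite ler_pM2r ?mulr_gt0.
  have : d * d <= d * (E * p) by rewrite ler_pM2l.
  have : q * d <= q * (E * (p - x)) by rewrite ler_wpM2l.
  have : d * d <= q * d by rewrite ler_pM2r.
  have : E * (p * y - q * x) = E by rewrite det mulr1.
  lra.
Qed.

Lemma reduced_basis_contra p q x y :
  0 < p -> 0 <= q -> p * d <= 1 -> q * d <= 1 -> 0 <= x < p -> p * y - q * x = 1 ->
  long_pair d E p q -> long_pair d E x y -> long_pair d E (x - p) (y - q) ->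
  long_pair d E (2 * p - x) (2 * q - y) -> False.
Proof.
move=> p0 q0 pd qd xp det hv [_ hz] [hw haw] [h2 _].
have hEp : d <= E * p.
  by rewrite -(gtr0_norm p0); apply: (long_pair_scaled_first hv); rewrite ger0_norm.
have [hI|hII] := ltrP (E * (p - x)) d.
- exact: (reduced_caseI p0 q0 pd qd xp det hv.1 hEp hI haw h2).
- exact: (reduced_caseII p0 q0 pd qd xp det hv.1 hEp hII hz hw).
Qed.

Lemma positive_basis_contra p q a b :
  0 < p -> 0 <= q -> p * d <= 1 -> q * d <= 1 -> p * b - q * a = 1 ->
  long_lattice d E p q a b -> False.
Proof.
move=> p0 q0 pd qd det hL.
have [f x_itv] : exists f : int, 0 <= a - p * f%:~R < p.
  exists (Num.floor (a / p)); have /andP[] := floor_itv (a / p).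
  rewrite ler_pdivlMr // ltr_pdivrMr // intrD mulrDl mul1r => h1 h2.
  by apply/andP; split; lra.
have hL' m n x y : (m != 0) || (n != 0) ->
    x = p * m%:~R + a * n%:~R -> y = q * m%:~R + b * n%:~R -> long_pair d E x y.
  by move=> mn -> ->; apply: hL.
have hv := long_lattice_first hL.
apply: (@reduced_basis_contra p q _ (b - q * f%:~R) p0 q0 pd qd x_itv _ hv).
- by rewrite -det; ring.
- by apply: (hL' (- f) 1); rewrite ?orbT // intrN; ring.
- by apply: (hL' (- f - 1) 1); rewrite ?orbT // intrB intrN; ring.
- by apply: (hL' (f + 2) (-1)); rewrite ?orbT // intrD; ring.
Qed.

Lemma short_basis_contra p q a b :
  short_vec d p q -> p * b - q * a = 1 -> long_lattice d E p q a b -> False.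
Proof.
wlog q0 : p q a b / 0 <= q.
  move=> hw spq det hL; have [q0|q_lt0] := lerP 0 q; first exact: hw q0 spq det hL.
  apply: (hw p (- q) (- a) b); rewrite ?oppr_ge0 ?ltW //.
  - by rewrite /short_vec normrN.
  - by rewrite mulrNN.
  - exact: long_lattice_flipy.
wlog p0 : p a b / 0 <= p.
  move=> hw spq det hL; have [p0|p_lt0] := lerP 0 p; first exact: hw p0 spq det hL.
  apply: (hw (- p) a (- b)); rewrite ?oppr_ge0 ?ltW //.
  - by rewrite /short_vec normrN.
  - by rewrite mulrNN.
  - exact: long_lattice_flipx.
move=> [pd qd] det hL; rewrite ger0_norm // in pd; rewrite ger0_norm // in qd.
have p_gt0 : 0 < p.
  rewrite lt_def p0 andbT; apply/eqP => p_eq0.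
  have := long_pair_scaled_first (long_lattice_first hL).
  by rewrite ger0_norm // p_eq0 normr0 mulr0 => /(_ qd); rewrite leNgt d_gt0.
exact: (positive_basis_contra p_gt0 q0 pd qd det hL).
Qed.

Lemma long_lattice_short_free p q a b (m n : int) :
  p * b - q * a = 1 -> long_lattice d E p q a b -> (m != 0) || (n != 0) ->
  ~ short_vec d (p * m%:~R + a * n%:~R) (q * m%:~R + b * n%:~R).
Proof.
move=> det hL /primitive_decomposition [k [i [j [u [v [k0 -> -> ij]]]]]] short.
apply: (short_basis_contra _ _ (long_lattice_change ij hL)).
- apply: (short_vec_intrM k0 (ltW d_gt0)); move: short.
  by rewrite !intrM ![_ * (k%:~R * _)]mulrCA -!mulrDr.
- have ij' : i%:~R * v%:~R - j%:~R * u%:~R = 1 :> R by rewrite -!intrM -intrB ij.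
  apply: (@eq_trans _ _ ((p * b - q * a) * (i%:~R * v%:~R - j%:~R * u%:~R))); first ring.
  by rewrite det ij' mulr1.
Qed.

Lemma long_lattice_inv_short_free p q a b (m n : int) :
  p * b - q * a = 1 -> long_lattice d E^-1 p q a b -> (m != 0) || (n != 0) ->
  ~ short_vec d (p * m%:~R + a * n%:~R) (q * m%:~R + b * n%:~R).
Proof.
move=> det /long_lattice_swap; rewrite invrK => hL mn [sx sy].
apply: (long_lattice_short_free (m := m) (n := - n) _ hL).
- by rewrite -det; ring.
- by rewrite oppr_eq0.
- by rewrite intrN !mulrNN.
Qed.

End Reduction.

Local Notation i1 := (lift ord0 ord0 : 'I_2).

Lemma det_mx22 (R : comRingType) (A : 'M[R]_2) :
  \det A = A ord0 ord0 * A i1 i1 - A ord0 i1 * A i1 ord0.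
Proof.
rewrite (expand_det_row _ ord0) !big_ord_recl big_ord0 /cofactor !det_mx11 !mxE /=.
have e1 : lift ord0 (0 : 'I_1) = i1 by apply: val_inj.
have e2 : lift i1 (0 : 'I_1) = ord0 by apply: val_inj.
rewrite e1 e2 /bump /= expr0 expr1; ring.
Qed.

Section LatticeGeometry.
Variable R : realType.
Implicit Types (g h : 'M[R]_2) (x y r s : R) (L : set 'cV[R]_2) (w : 'cV[R]_2).

Lemma mulmx_vec2 g x y :
  g *m vec2 x y = vec2 (g ord0 ord0 * x + g ord0 i1 * y) (g i1 ord0 * x + g i1 i1 * y).
Proof.
apply/matrixP => i j; rewrite !mxE !big_ord_recl big_ord0 !mxE addr0 /=.
by case: i => [[|[|//]]] Hi; congr (g _ _ * _ + g _ _ * _); apply: val_inj.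
Qed.

Lemma a_mulmx_vec2 s x y : a_ s *m vec2 x y = vec2 (expR s * x) (expR (- s) * y).
Proof. by rewrite mulmx_vec2; congr vec2; rewrite !mxE /=; ring. Qed.

Lemma supnorm_vec2 x y : supnorm (vec2 x y) = Num.max `|x| `|y|.
Proof. by rewrite /supnorm !mxE. Qed.

Lemma det_a s : \det (a_ s) = 1.
Proof. by rewrite det_mx22 !mxE /= mulr0 subr0 -expRD subrr expR0. Qed.

Lemma act_lattice_of h g : act h (lattice_of g) = lattice_of (h *m g).
Proof.
apply/seteqP; split=> w.
- by move=> [v [m _ [n _ <-]] <-]; exists m => //; exists n => //; rewrite mulmxA.
- move=> [m _ [n _ <-]]; exists (g *m vec2 m%:~R n%:~R); last by rewrite mulmxA.
  by exists m => //; exists n.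
Qed.

Lemma vec2_eq0 x y : (vec2 x y == 0) = (x == 0) && (y == 0).
Proof.
apply/eqP/andP => [v0|[/eqP-> /eqP->]].
- move/matrixP: v0 => v0; move: (v0 ord0 ord0) (v0 i1 ord0).
  by rewrite !mxE eqxx /= => -> ->.
- by apply/matrixP => i j; rewrite !mxE; case: ifP.
Qed.

Lemma supnorm_gt0 w : w != 0 -> 0 < supnorm w.
Proof.
move=> w0; rewrite lt_max !normr_gt0; apply: contraNT w0; rewrite negb_or !negbK.
move=> /andP[/eqP w0 /eqP w1]; apply/eqP/matrixP => i j; rewrite (ord1 j) mxE.
by case: i => [[|[|//]]] Hi; [rewrite -w0 | rewrite -w1]; congr (w _ _); apply: val_inj.
Qed.

Lemma Delta_le_supnorm L r w :
  (Delta L <= r%:E)%E -> L w -> w != 0 -> expR (- r) <= supnorm w.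
Proof.
move=> /ereal_supP DL Lw w0; have w_gt0 := supnorm_gt0 w0.
have Lw' : (L `\ 0) w by split=> //; apply/eqP.
have := DL _ (ex_intro2 _ _ w Lw' erefl).
rewrite lee_fin div1r lnV ?posrE // => hw.
by rewrite -(lnK (x := supnorm w)) ?posrE // ler_expR; lra.
Qed.

Lemma Delta_gt_supnorm L r :
  ((- r)%:E < Delta L)%E -> exists2 w, (L `\ 0) w & supnorm w < expR r.
Proof.
move=> /ereal_sup_gt [_ [w Lw0 <-] hw]; exists w => //.
have w_gt0 : 0 < supnorm w by apply: supnorm_gt0; apply/eqP; exact: Lw0.2.
move: hw; rewrite lte_fin div1r lnV ?posrE // => hw.
by rewrite -(lnK (x := supnorm w)) ?posrE // ltr_expR; lra.
Qed.

Lemma lattice_of_supnorm_ge g r (m n : int) :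
  g \in unitmx -> (Delta (lattice_of g) <= r%:E)%E -> (m != 0) || (n != 0) ->
  expR (- r) <= supnorm (g *m vec2 m%:~R n%:~R).
Proof.
move=> gu Dg mn; apply: (Delta_le_supnorm Dg); first by exists m => //; exists n.
apply: contraTneq mn => /(congr1 (mulmx (invmx g))); rewrite mulKmx // mulmx0 => /eqP.
by rewrite vec2_eq0 !intr_eq0 negb_or !negbK.
Qed.

Lemma Delta_long_lattice r s g : g \in unitmx ->
  (Delta (lattice_of g) <= r%:E)%E -> (Delta (act (a_ s) (lattice_of g)) <= r%:E)%E ->
  long_lattice (expR (- r)) (expR s) (g ord0 ord0) (g i1 ord0) (g ord0 i1) (g i1 i1).
Proof.
move=> gu Dg; rewrite act_lattice_of => Dag m n mn.
have agu : a_ s *m g \in unitmx by rewrite unitmx_mul gu unitmxE det_a unitr1.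
have := lattice_of_supnorm_ge agu Dag mn; have := lattice_of_supnorm_ge gu Dg mn.
rewrite -mulmxA (mulmx_vec2 g) a_mulmx_vec2 !supnorm_vec2 !le_max !expRN.
by move=> /orP hv /orP haw; split; rewrite // [_ / _]mulrC.
Qed.

Lemma Delta_short_vector r g : 0 < r -> (0 <= Delta (lattice_of g))%E ->
  exists m n : int, ((m != 0) || (n != 0)) /\ short_vec (expR (- r))
    (g ord0 ord0 * m%:~R + g ord0 i1 * n%:~R) (g i1 ord0 * m%:~R + g i1 i1 * n%:~R).
Proof.
move=> r0 D0; have r0' : ((- r)%:E < 0)%E by rewrite lte_fin oppr_lt0.
have [w [[m _ [n _ <-]] w0] w_lt] := Delta_gt_supnorm (lt_le_trans r0' D0).
exists m, n; split.
- apply: contra_notT w0 => /norP[/negPn/eqP-> /negPn/eqP->].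
  by apply/eqP; rewrite mulmx_vec2 vec2_eq0 !mulr0 addr0 eqxx.
- move: w_lt; rewrite mulmx_vec2 supnorm_vec2 gt_max => /andP[hx hy].
  by split; rewrite expRN ler_pdivrMr ?expR_gt0 // mul1r ltW.
Qed.

Lemma expR_bounds r s : 0 < r -> r < ln (101 / 100 : R) ->
  6 * r <= `|s| -> `|s| <= ln (19 / 10 : R) ->
  [/\ 100 / 101 < expR (- r), expR (- r) < 1,
      1 <= expR `|s| * expR (- r) ^+ 6 & expR `|s| <= 19 / 10].
Proof.
move=> r0 r_lt s_ge s_le; split.
- have e : expR (- ln (101 / 100 : R)) = 100 / 101 by rewrite expRN lnK ?posrE // invf_div.
  by rewrite -e ltr_expR; lra.
- by rewrite -expR0 ltr_expR; lra.
- by rewrite -expRM_natl -expRD -[X in X <= _]expR0 ler_expR; lra.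
- by rewrite -(lnK (x := 19 / 10)) ?posrE // ler_expR.
Qed.

End LatticeGeometry.

Theorem lemma3p2 (R : realType) (r s : R) :
  0 < r -> r < ln (101 / 100 : R) ->
  6 * r <= `|s| -> `|s| <= ln (19 / 10 : R) ->
  [set act (a_ s) L | L in K r] `&` K r = set0.
Proof.
move=> r0 r_lt s_ge s_le.
rewrite -subset0 => _ [[_ [[g [det_g ->]] [D0 Dg]] <-] [_ [_ Dag]]].
have [d_gt d_lt1 E_ge E_le] := expR_bounds r0 r_lt s_ge s_le.
have gu : g \in unitmx by rewrite unitmxE det_g unitr1.
have hL := Delta_long_lattice gu Dg Dag.
have [m [n [mn short]]] := Delta_short_vector r0 D0.
have det : g ord0 ord0 * g i1 i1 - g i1 ord0 * g ord0 i1 = 1.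
  by rewrite -det_g det_mx22 [g i1 ord0 * _]mulrC.
have [s_ge0|s_lt0] := lerP 0 s.
- rewrite ger0_norm // in E_ge E_le.
  exact: (long_lattice_short_free d_gt d_lt1 E_ge E_le det hL mn short).
- rewrite ltr0_norm // in E_ge E_le; rewrite -[s]opprK [expR (- - s)]expRN in hL.
  exact: (long_lattice_inv_short_free d_gt d_lt1 E_ge E_le det hL mn short).
Qed.
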